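(* Let $Q$ be a quantale, $M$ a shrinkable $Q$-module and $\mathcal{F},\mathcal{G}\in\operatorname{mF}(Q)$. For $a,b\in M$ and $n,m\in\mathbb{N}$ (with $n,m\ge1$), if $a\preceq^n_\mathcal{F}b$ and $a\preceq^m_\mathcal{G}b$, then $a\preceq^{n+m-1}_{\mathcal{F}\cap\mathcal{G}}b$.
   Context: A quantale is a poset $Q$ in which every nonempty subset has a join $\sum$ (binary join $a+b$; no bottom required), with top $1$ and a commutative associative multiplication with unit $1$ distributing over nonempty joins. A $Q$-module is a poset $M$ with all nonempty joins and an associative unital action $Q\times M\to M$ distributing over nonempty joins in each variable. A multiplicative filter (m-filter) is a subset $\mathcal{F}\subseteq Q$ containing $1$, upward closed and closed under multiplication; $\operatorname{mF}(Q)$ is the set of m-filters. For $x,x_i$ write $x\le^*\sum_{i\in I}x_i$ if $x\le\sum_{i\in I_0}x_i$ for some finite nonempty $I_0\subseteq I$. $M$ is shrinkable if whenever $x\le\sum_{i\in I}x_i$ in $M$ there is a family $(y_j)_{j\in J}$ with $x=\sum_jy_j$ and $y_j\le^*\sum_ix_i$ for all $j$. For $a,b\in M$, $a\preceq^1_\mathcal{F}b$ means there are families $(a_i)_{i\in I}$ in $M$ and $(s_i)_{i\in I}$ in $\mathcal{F}$ with $a\le\sum_ia_i$ and $s_ia_i\le b$ for all $i$; $a\preceq^n_\mathcal{F}b$ ($n\ge1$) means there exist $c_1,\dots,c_{n-1}\in M$ with $a\preceq^1_\mathcal{F}c_1\preceq^1_\mathcal{F}\cdots\preceq^1_\mathcal{F}c_{n-1}\preceq^1_\mathcal{F}b$.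 *)

From Stdlib Require Import List.

Definition is_lub {T : Type} (le : T -> T -> Prop) (S : T -> Prop) (x : T) : Prop :=
  (forall y, S y -> le y x) /\ (forall z, (forall y, S y -> le y z) -> le x z).

Definition nonempty {T : Type} (S : T -> Prop) : Prop := exists x, S x.

Record Quantale := {
  qcar :> Type;
  qle : qcar -> qcar -> Prop;
  qle_refl : forall x, qle x x;
  qle_trans : forall x y z, qle x y -> qle y z -> qle x z;
  qle_antisym : forall x y, qle x y -> qle y x -> x = y;
  qsup : (qcar -> Prop) -> qcar;
  qsup_lub : forall S, nonempty S -> is_lub qle S (qsup S);
  qone : qcar;
  qone_top : forall x, qle x qone;
  qmul : qcar -> qcar -> qcar;
  qmulC : forall x y, qmul x y = qmul y x;
  qmulA : forall x y z, qmul x (qmul y z) = qmul (qmul x y) z;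
  qmul1 : forall x, qmul qone x = x;
  qmul_sup : forall a S, nonempty S ->
    qmul a (qsup S) = qsup (fun y => exists x, S x /\ y = qmul a x)
}.

Record QModule (Q : Quantale) := {
  mcar :> Type;
  mle : mcar -> mcar -> Prop;
  mle_refl : forall x, mle x x;
  mle_trans : forall x y z, mle x y -> mle y z -> mle x z;
  mle_antisym : forall x y, mle x y -> mle y x -> x = y;
  msup : (mcar -> Prop) -> mcar;
  msup_lub : forall S, nonempty S -> is_lub mle S (msup S);
  act : qcar Q -> mcar -> mcar;
  act_assoc : forall r s x, act (qmul Q r s) x = act r (act s x);
  act_one : forall x, act (qone Q) x = x;
  act_supl : forall (S : qcar Q -> Prop) x, nonempty S ->
    act (qsup Q S) x = msup (fun y => exists r, S r /\ y = act r x);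
  act_supr : forall r (S : mcar -> Prop), nonempty S ->
    act r (msup S) = msup (fun y => exists x, S x /\ y = act r x)
}.

Arguments mle {Q} _ _ _.
Arguments msup {Q} _ _.
Arguments act {Q} _ _ _.

Definition mfilter (Q : Quantale) (F : qcar Q -> Prop) : Prop :=
  F (qone Q) /\
  (forall x y, F x -> qle Q x y -> F y) /\
  (forall x y, F x -> F y -> F (qmul Q x y)).

(* join of a family (x_i)_{i in I}; used only for inhabited I *)
Definition fsum {Q : Quantale} (M : QModule Q) {I : Type} (f : I -> M) : M :=
  msup M (fun y => exists i, y = f i).

(* x <=* sum_i x_i : x is below the join over some finite nonempty I0 ⊆ I,
   I0 given as a nonempty list of indices *)
Definition le_star {Q : Quantale} (M : QModule Q) (x : M) {I : Type} (f : I -> M) : Prop :=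
  exists l : list I, l <> nil /\
    mle M x (msup M (fun y => exists i, In i l /\ y = f i)).

Definition shrinkable {Q : Quantale} (M : QModule Q) : Prop :=
  forall (x : M) (I : Type) (f : I -> M), inhabited I ->
    mle M x (fsum M f) ->
    exists (J : Type) (g : J -> M), inhabited J /\ x = fsum M g /\
      forall j, le_star M (g j) f.

Definition prec1 {Q : Quantale} (M : QModule Q) (F : qcar Q -> Prop) (a b : M) : Prop :=
  exists (I : Type) (ai : I -> M) (si : I -> qcar Q), inhabited I /\
    mle M a (fsum M ai) /\ (forall i, F (si i)) /\
    (forall i, mle M (act M (si i) (ai i)) b).

(* chain of k+1 steps of <=^1_F (k intermediate elements) *)
Fixpoint prec_chain {Q : Quantale} (M : QModule Q) (F : qcar Q -> Prop) (k : nat) (a b : M) : Prop :=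
  match k with
  | O => prec1 M F a b
  | S k' => exists c, prec1 M F a c /\ prec_chain M F k' c b
  end.

(* a <=^n_F b, meaningful for n >= 1 *)
Definition precn {Q : Quantale} (M : QModule Q) (F : qcar Q -> Prop) (n : nat) (a b : M) : Prop :=
  prec_chain M F (n - 1) a b.

(* Under shrinkability a step x <=^1_F c can be witnessed piecewise: x is a
   join of pieces g with s g <= c for some s in F.  Refining such a
   decomposition for F by one for G writes x as a join of pieces z carrying
   s in F and t in G, and the coefficient s v t, which lies in F n G, sends z
   below (s z) v (t z).  Hence x <=^1_{F n G} Y_F v Y_G with Y_F <= c,
   Y_G <= d, and both below x.  So Y_F has a shorter F-chain (from c) and the
   full G-chain (from x), Y_G symmetrically, and an induction on the pair of
   chain lengths finishes the F n G-chain in n + m - 2 further steps. *)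
From Stdlib Require Import List Lia.

Section Joins.

Variable Q : Quantale.
Variable M : QModule Q.

Lemma msup_ub (S : M -> Prop) y : S y -> mle M y (msup M S).
Proof. intro Hy. exact (proj1 (msup_lub Q M S (ex_intro _ y Hy)) y Hy). Qed.

Lemma msup_least (S : M -> Prop) z :
  nonempty S -> (forall y, S y -> mle M y z) -> mle M (msup M S) z.
Proof. intros HS Hz. exact (proj2 (msup_lub Q M S HS) z Hz). Qed.

Lemma msup_ext (S T : M -> Prop) :
  nonempty S -> (forall y, S y <-> T y) -> msup M S = msup M T.
Proof.
  intros [y Sy] HST.
  assert (HT : nonempty T) by (exists y; apply HST, Sy).
  apply mle_antisym; apply msup_least; try (exists y; auto; apply HST; auto);
    intros w Hw; apply msup_ub, HST, Hw.
Qed.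

Lemma fsum_ub {I : Type} (f : I -> M) i : mle M (f i) (fsum M f).
Proof. apply msup_ub. exists i. reflexivity. Qed.

Lemma fsum_least {I : Type} (f : I -> M) z :
  inhabited I -> (forall i, mle M (f i) z) -> mle M (fsum M f) z.
Proof.
  intros [i] Hz. apply msup_least; [exists (f i), i; reflexivity|].
  intros y [j ->]. apply Hz.
Qed.

Definition mjoin (u v : M) : M := msup M (fun y => y = u \/ y = v).

Lemma mjoin_ubl u v : mle M u (mjoin u v).
Proof. apply msup_ub. auto. Qed.

Lemma mjoin_ubr u v : mle M v (mjoin u v).
Proof. apply msup_ub. auto. Qed.

Lemma mjoin_least u v z : mle M u z -> mle M v z -> mle M (mjoin u v) z.
Proof. intros. apply msup_least; [exists u; auto|]. intros y [-> | ->]; auto. Qed.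

Lemma mjoin_idPr u v : mle M u v -> mjoin u v = v.
Proof.
  intro Huv. apply mle_antisym.
  - apply mjoin_least; [exact Huv | apply mle_refl].
  - apply mjoin_ubr.
Qed.

Lemma act_mjoin r u v : act M r (mjoin u v) = mjoin (act M r u) (act M r v).
Proof.
  unfold mjoin. rewrite act_supr by (exists u; auto).
  apply msup_ext; [exists (act M r u), u; auto|].
  intro y. split.
  - intros [w [[-> | ->] ->]]; auto.
  - intros [-> | ->]; eauto.
Qed.

Lemma act_monotone r u v : mle M u v -> mle M (act M r u) (act M r v).
Proof. intro Huv. rewrite <- (mjoin_idPr u v Huv), act_mjoin. apply mjoin_ubl. Qed.

Definition qjoin (r s : Q) : Q := qsup Q (fun p => p = r \/ p = s).

Lemma qjoin_ubl r s : qle Q r (qjoin r s).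
Proof. exact (proj1 (qsup_lub Q _ (ex_intro _ r (or_introl eq_refl))) r (or_introl eq_refl)). Qed.

Lemma qjoin_ubr r s : qle Q s (qjoin r s).
Proof. exact (proj1 (qsup_lub Q _ (ex_intro _ r (or_introl eq_refl))) s (or_intror eq_refl)). Qed.

Lemma qjoin_idPr r s : qle Q r s -> qjoin r s = s.
Proof.
  intro Hrs. apply qle_antisym; [|apply qjoin_ubr].
  apply (proj2 (qsup_lub Q _ (ex_intro _ r (or_introl eq_refl)))).
  intros p [-> | ->]; [exact Hrs | apply qle_refl].
Qed.

Lemma act_qjoin r s x : act M (qjoin r s) x = mjoin (act M r x) (act M s x).
Proof.
  unfold qjoin. rewrite act_supl by (exists r; auto).
  apply msup_ext; [exists (act M r x), r; auto|].
  intro y. split.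
  - intros [p [[-> | ->] ->]]; auto.
  - intros [-> | ->]; eauto.
Qed.

Lemma act_monotone_scalar r s x : qle Q r s -> mle M (act M r x) (act M s x).
Proof. intro Hrs. rewrite <- (qjoin_idPr r s Hrs), act_qjoin. apply mjoin_ubl. Qed.

Lemma act_le r x : mle M (act M r x) x.
Proof. rewrite <- (act_one Q M x) at 2. apply act_monotone_scalar, qone_top. Qed.

End Joins.

Arguments mjoin {Q} M u v.

Section Steps.

Variable Q : Quantale.
Variable M : QModule Q.
Variable H : qcar Q -> Prop.

Lemma prec1_le_l (a a' c : M) : mle M a' a -> prec1 M H a c -> prec1 M H a' c.
Proof.
  intros Ha (I & ai & si & HI & Hsum & Hs & Hc).
  exists I, ai, si. refine (conj HI (conj _ (conj Hs Hc))). eapply mle_trans; eauto.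
Qed.

Lemma prec1_le_r (a c c' : M) : prec1 M H a c -> mle M c c' -> prec1 M H a c'.
Proof.
  intros (I & ai & si & HI & Hsum & Hs & Hc) Hcc.
  exists I, ai, si. refine (conj HI (conj Hsum (conj Hs _))).
  intro i. eapply mle_trans; eauto.
Qed.

Lemma prec1_of_le (u v : M) : H (qone Q) -> mle M u v -> prec1 M H u v.
Proof.
  intros H1 Huv. exists unit, (fun _ => u), (fun _ => qone Q).
  refine (conj (inhabits tt) (conj (fsum_ub Q M (fun _ : unit => u) tt) (conj (fun _ => H1) _))).
  intros _. rewrite act_one. exact Huv.
Qed.

Lemma prec1_mjoin (u v c d : M) :
  prec1 M H u c -> prec1 M H v d -> prec1 M H (mjoin M u v) (mjoin M c d).
Proof.
  intros (I & ai & si & HI & Hu & Hs & Hc) (J & bj & tj & HJ & Hv & Ht & Hd).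
  exists (I + J)%type, (fun p => match p with inl i => ai i | inr j => bj j end),
    (fun p => match p with inl i => si i | inr j => tj j end).
  destruct HI as [i0]. refine (conj (inhabits (inl i0)) (conj _ (conj _ _))).
  - apply mjoin_least.
    + eapply mle_trans; [exact Hu|]. apply fsum_least; [exact (inhabits i0)|].
      intro i. exact (fsum_ub Q M _ (inl i)).
    + eapply mle_trans; [exact Hv|]. apply fsum_least; [exact HJ|].
      intro j. exact (fsum_ub Q M _ (inr j)).
  - intros [i | j]; auto.
  - intros [i | j]; eapply mle_trans;
      [apply Hc | apply mjoin_ubl | apply Hd | apply mjoin_ubr].
Qed.

Fixpoint prec_steps (k : nat) (a b : M) : Prop :=
  match k with
  | O => mle M a b
  | S k' => exists c, prec1 M H a c /\ prec_steps k' c b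
  end.

Lemma prec_chain_steps k (a b : M) : prec_chain M H k a b <-> prec_steps (S k) a b.
Proof.
  revert a. induction k as [|k IH]; intro a; simpl.
  - split.
    + intro Hab. exists b. split; [exact Hab | apply mle_refl].
    + intros [c [Hac Hcb]]. exact (prec1_le_r a c b Hac Hcb).
  - split; intros [c [Hac Hcb]]; exists c; split; auto; apply IH; exact Hcb.
Qed.

Lemma prec_steps_le_l k (a a' b : M) :
  mle M a' a -> prec_steps k a b -> prec_steps k a' b.
Proof.
  destruct k; simpl; intros Ha Hab.
  - eapply mle_trans; eauto.
  - destruct Hab as [c [Hac Hcb]]. exists c. split; [eapply prec1_le_l|]; eauto.
Qed.

Lemma prec_steps_of_le k (u b : M) : H (qone Q) -> mle M u b -> prec_steps k u b.
Proof.
  intro H1. revert u. induction k as [|k IH]; simpl; intros u Hub; [exact Hub|].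
  exists b. split; [apply prec1_of_le|apply IH, mle_refl]; auto.
Qed.

Lemma prec_steps_mjoin k (u v b : M) :
  prec_steps k u b -> prec_steps k v b -> prec_steps k (mjoin M u v) b.
Proof.
  revert u v. induction k as [|k IH]; simpl; intros u v Hu Hv.
  - apply mjoin_least; assumption.
  - destruct Hu as [c [Huc Hcb]], Hv as [d [Hvd Hdb]].
    exists (mjoin M c d). split; [apply prec1_mjoin | apply IH]; auto.
Qed.

End Steps.

Arguments prec_steps {Q} M H k a b.

Lemma mfilter_list_bound {Q : Quantale} (M : QModule Q) (F : qcar Q -> Prop)
  {I : Type} (f : I -> M) (si : I -> qcar Q) (c : M) (l : list I) :
  mfilter Q F -> (forall i, F (si i)) -> (forall i, mle M (act M (si i) (f i)) c) ->
  exists s, F s /\ forall i, In i l -> mle M (act M s (f i)) c.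
Proof.
  intros (F1 & _ & Fmul) Hs Hc. induction l as [|i l (s & Fs & Hl)].
  - exists (qone Q). split; [exact F1 | intros i []].
  - exists (qmul Q s (si i)). split; [auto|]. intros j [<- | Hj].
    + rewrite act_assoc. eapply mle_trans; [apply act_le | apply Hc].
    + rewrite qmulC, act_assoc. eapply mle_trans; [apply act_le | apply Hl, Hj].
Qed.

Lemma le_star_act_bound {Q : Quantale} (M : QModule Q) (F : qcar Q -> Prop)
  {I : Type} (f : I -> M) (si : I -> qcar Q) (c y : M) :
  mfilter Q F -> (forall i, F (si i)) -> (forall i, mle M (act M (si i) (f i)) c) ->
  le_star M y f -> exists s, F s /\ mle M (act M s y) c.
Proof.
  intros HF Hs Hc [l [Hl Hy]].
  destruct (mfilter_list_bound M F f si c l HF Hs Hc) as (s & Fs & Hsl).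
  exists s. split; [exact Fs|].
  destruct l as [|i0 l]; [congruence|].
  eapply mle_trans; [apply act_monotone, Hy|].
  rewrite act_supr by (exists (f i0), i0; simpl; auto).
  apply msup_least.
  - exists (act M s (f i0)), (f i0). split; [exists i0; simpl|]; auto.
  - intros w [z [[i [Hi ->]] ->]]. apply Hsl, Hi.
Qed.

Lemma prec1_shrink {Q : Quantale} (M : QModule Q) (F : qcar Q -> Prop) (x c : M) :
  shrinkable M -> mfilter Q F -> prec1 M F x c ->
  exists (J : Type) (g : J -> M), inhabited J /\ x = fsum M g /\
    forall j, exists s, F s /\ mle M (act M s (g j)) c.
Proof.
  intros Hsh HF (I & ai & si & HI & Hx & Hs & Hc).
  destruct (Hsh x I ai HI Hx) as (J & g & HJ & Hg & Hstar).
  exists J, g. refine (conj HJ (conj Hg _)).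
  intro j. exact (le_star_act_bound M F ai si c (g j) HF Hs Hc (Hstar j)).
Qed.

Section MeetStep.

Variable Q : Quantale.
Variable M : QModule Q.
Variables F G : qcar Q -> Prop.
Hypothesis shrinkM : shrinkable M.
Hypothesis filterF : mfilter Q F.
Hypothesis filterG : mfilter Q G.
Variables x c d : M.

Definition meet_witness (z : M) (s t : qcar Q) : Prop :=
  F s /\ G t /\ mle M z x /\ mle M (act M s z) c /\ mle M (act M t z) d.

Let Witnessed (z : M) : Prop := exists s t, meet_witness z s t.

Lemma meet_witness_cover :
  prec1 M F x c -> prec1 M G x d -> nonempty Witnessed /\ mle M x (msup M Witnessed).
Proof.
  intros Hxc Hxd.
  destruct (prec1_shrink M F x c shrinkM filterF Hxc) as (J & g & [j0] & Hxg & Hg).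
  assert (Hpiece : forall j, nonempty Witnessed /\ mle M (g j) (msup M Witnessed)).
  { intro j. destruct (Hg j) as (s & Fs & Hs).
    assert (Hgx : mle M (g j) x) by (rewrite Hxg; apply fsum_ub).
    destruct (prec1_shrink M G (g j) d shrinkM filterG (prec1_le_l Q M G x (g j) d Hgx Hxd))
      as (J' & h & [j'] & Hgh & Hh).
    assert (Hw : forall k, Witnessed (h k)).
    { intro k. destruct (Hh k) as (t & Gt & Ht).
      assert (Hhg : mle M (h k) (g j)) by (rewrite Hgh; apply fsum_ub).
      exists s, t. repeat split; auto.
      - eapply mle_trans; eauto.
      - eapply mle_trans; [apply act_monotone, Hhg | exact Hs]. }
    split; [exists (h j'); apply Hw|].
    rewrite Hgh. apply fsum_least; [exact (inhabits j')|]. intro k. apply msup_ub, Hw. }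
  split; [apply (Hpiece j0)|].
  rewrite Hxg at 1. apply fsum_least; [exact (inhabits j0)|]. intro j. apply Hpiece.
Qed.

Lemma prec1_meet :
  prec1 M F x c -> prec1 M G x d ->
  exists YF YG, mle M YF c /\ mle M YF x /\ mle M YG d /\ mle M YG x /\
    prec1 M (fun r => F r /\ G r) x (mjoin M YF YG).
Proof.
  intros Hxc Hxd.
  destruct (meet_witness_cover Hxc Hxd) as [[z0 (s0 & t0 & W0)] Hx].
  set (YF := msup M (fun y => exists z s t, meet_witness z s t /\ y = act M s z)).
  set (YG := msup M (fun y => exists z s t, meet_witness z s t /\ y = act M t z)).
  assert (HYF : forall z s t, meet_witness z s t -> mle M (act M s z) YF)
    by (intros z s t Hw; apply msup_ub; eauto 6).
  assert (HYG : forall z s t, meet_witness z s t -> mle M (act M t z) YG)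
    by (intros z s t Hw; apply msup_ub; eauto 6).
  exists YF, YG. split; [|split; [|split; [|split]]].
  1-4: apply msup_least; [eexists; eauto 6|];
       intros y (z & s & t & (Fs & Gt & Hzx & Hsz & Htz) & ->).
  1,3: assumption.
  1,2: eapply mle_trans; [apply act_le | exact Hzx].
  exists {p : M * qcar Q * qcar Q | let '(z, s, t) := p in meet_witness z s t},
    (fun p => fst (fst (proj1_sig p))),
    (fun p => let '(_, s, t) := proj1_sig p in qjoin Q s t).
  refine (conj (inhabits (exist _ (z0, s0, t0) W0)) (conj _ (conj _ _))).
  - eapply mle_trans; [exact Hx|]. apply msup_least; [exists z0, s0, t0; exact W0|].
    intros z (s & t & Hw). exact (fsum_ub Q M _ (exist _ (z, s, t) Hw)).
  - intros [[[z s] t] Hw]; simpl.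
    destruct filterF as (_ & Fup & _), filterG as (_ & Gup & _), Hw as (Fs & Gt & _).
    split; [apply (Fup s), qjoin_ubl | apply (Gup t), qjoin_ubr]; assumption.
  - intros [[[z s] t] Hw]; simpl. rewrite act_qjoin.
    apply mjoin_least; eapply mle_trans;
      [apply (HYF z s t Hw) | apply mjoin_ubl | apply (HYG z s t Hw) | apply mjoin_ubr].
Qed.

End MeetStep.

Lemma prec_steps_meet {Q : Quantale} (M : QModule Q) (F G : qcar Q -> Prop) (b : M) :
  shrinkable M -> mfilter Q F -> mfilter Q G ->
  forall k1 k2 x, prec_steps M F (S k1) x b -> prec_steps M G (S k2) x b ->
    prec_steps M (fun r => F r /\ G r) (S (k1 + k2)) x b.
Proof.
  intros Hsh HF HG.
  assert (H1 : F (qone Q) /\ G (qone Q)) by (split; [apply HF | apply HG]).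
  induction k1 as [|k1 IH1]; induction k2 as [|k2 IH2]; intros x HxF HxG;
    pose proof HxF as (c & Hxc & Hcb); pose proof HxG as (d & Hxd & Hdb);
    destruct (prec1_meet Q M F G Hsh HF HG x c d Hxc Hxd)
      as (YF & YG & HYFc & HYFx & HYGd & HYGx & Hx);
    exists (mjoin M YF YG); (split; [exact Hx | apply prec_steps_mjoin]).
  (* A branch whose own chain has ended lies below [b]. *)
  all: try (apply prec_steps_of_le; [exact H1 |
              first [exact (mle_trans _ _ _ _ _ HYFc Hcb) | exact (mle_trans _ _ _ _ _ HYGd Hdb)]]).
  2,3: apply IH1; [exact (prec_steps_le_l Q M F _ c YF b HYFc Hcb)
                  | exact (prec_steps_le_l Q M G _ x YF b HYFx HxG)].
  - apply IH2; [exact (prec_steps_le_l Q M F _ x YG b HYGx HxF)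
              | exact (prec_steps_le_l Q M G _ d YG b HYGd Hdb)].
  - rewrite <- plus_n_Sm.
    apply IH2; [exact (prec_steps_le_l Q M F _ x YG b HYGx HxF)
              | exact (prec_steps_le_l Q M G _ d YG b HYGd Hdb)].
Qed.

Theorem mainTheorem4 (Q : Quantale) (M : QModule Q) (F G : qcar Q -> Prop)
  (a b : M) (n m : nat) :
  shrinkable M -> mfilter Q F -> mfilter Q G ->
  1 <= n -> 1 <= m ->
  precn M F n a b -> precn M G m a b ->
  precn M (fun x => F x /\ G x) (n + m - 1) a b.
Proof.
  intros Hsh HF HG Hn Hm HabF HabG. unfold precn in *.
  destruct n as [|n]; [lia|]. destruct m as [|m]; [lia|].
  replace (S n - 1) with n in HabF by lia.
  replace (S m - 1) with m in HabG by lia.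
  replace (S n + S m - 1 - 1) with (n + m) by lia.
  rewrite prec_chain_steps in *.
  exact (prec_steps_meet M F G b Hsh HF HG n m a HabF HabG).
Qed.
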